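(* Let $K$ be any field, $1\le d\le n$, $N \ge n+d$, and $I = (S_N.\,e_n^d(x_1,\dots,x_n)) \subseteq K[x_1,\dots,x_N]$. Then $$(x_1 - x_{n+1})(x_2 - x_{n+2})\cdots(x_d - x_{n+d}) \in I.$$
   Context: $e_n^d(x_1,\dots,x_n)$ denotes the elementary symmetric polynomial of degree $d$ in $x_1,\dots,x_n$; $(S_N.g)$ denotes the ideal generated by the orbit of $g$ under the permutation action of $S_N$ on the variables. *)

From HB Require Import structures.
From mathcomp Require Import all_boot all_order all_algebra all_fingroup.
From mathcomp Require Import multinomials.mpoly.
Set Implicit Arguments. Unset Strict Implicit. Unset Printing Implicit Defensive.
Import GRing.Theory.
Local Open Scope ring_scope.

Definition in_ideal_gen (R : comNzRingType) (G : pred R) (p : R) : Prop :=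
  exists s : seq (R * R),
    all (fun cg => cg.2 \in G) s /\ p = \sum_(cg <- s) cg.1 * cg.2.

(* The S_N-orbit of g in K[x_1..x_N], S_N acting by permuting variables
   (msym s substitutes x_i |-> x_(s i)). *)
Definition sym_orbit (N : nat) (R : comNzRingType) (g : {mpoly R[N]}) : pred {mpoly R[N]} :=
  fun q => [exists s : 'S_N, q == msym s g].

(* Variable x_(k+1) (0-based index k) of K[x_1..x_N]; 0 if k >= N (never used
   out of range below). *)
Definition xv (N : nat) (R : comNzRingType) (k : nat) : {mpoly R[N]} :=
  if insub k is Some i then 'X_i else 0.

Definition esym_first (N : nat) (R : comNzRingType) (n d : nat) : {mpoly R[N]} :=
  \sum_(h : {set 'I_N} | (h \subset [set i : 'I_N | (i < n)%N]) && (#|h| == d))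
     \prod_(i in h) 'X_i.

(* Write P_k = prod_(i<k) (x_i - x_(n+i)) and A_k = {x_k, ..., x_(n-1)}.  We
   show by induction on k <= d that P_k e_(d-k)(A_k) lies in I; for k = 0 it is
   the generator, and k = d is the claim.  The transposition (x_k x_(n+k))
   fixes P_k and turns A_k = {x_k} u A_(k+1) into {x_(n+k)} u A_(k+1); by the
   recursion e_(j+1)(a u B) = e_(j+1)(B) + a e_j(B), the difference of
   P_k e_(d-k)(A_k) and its image is P_k (x_k - x_(n+k)) e_(d-k-1)(A_(k+1)). *)
From HB Require Import structures.
From mathcomp Require Import all_boot all_order all_algebra all_fingroup.
From mathcomp Require Import multinomials.mpoly.
From mathcomp Require Import zify.
Import GRing.Theory.
Local Open Scope ring_scope.
Set Implicit Arguments. Unset Strict Implicit.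

Section IdealGen.
Variables (R : comNzRingType) (G : pred R).

Lemma in_ideal_gen_mem g : g \in G -> in_ideal_gen G g.
Proof. by move=> Gg; exists [:: (1, g)]; rewrite /= Gg big_seq1 mul1r. Qed.

Lemma in_ideal_genB p q :
  in_ideal_gen G p -> in_ideal_gen G q -> in_ideal_gen G (p - q).
Proof.
move=> [s [Gs ->]] [t [Gt ->]].
exists (s ++ map (fun cg => (- cg.1, cg.2)) t); split.
  by rewrite all_cat Gs all_map.
by rewrite big_cat big_map -sumrN; congr (_ + _); apply: eq_bigr => cg _; rewrite mulNr.
Qed.

Lemma in_ideal_gen_rmorph (f : {rmorphism R -> R}) :
  {homo f : g / g \in G} -> {homo f : p / in_ideal_gen G p}.
Proof.
move=> fG p [s [Gs ->]]; exists (map (fun cg => (f cg.1, f cg.2)) s); split.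
  by rewrite all_map; apply/allP => cg /(allP Gs) /fG.
by rewrite rmorph_sum big_map; apply: eq_bigr => cg _; rewrite rmorphM.
Qed.

End IdealGen.

Section PermSets.
Variable T : finType.
Implicit Types (A B : {set T}) (s : {perm T}).

Lemma imset_perm_subset s A B : (s @: A \subset s @: B) = (A \subset B).
Proof.
apply/idP/idP => [/subsetP sAB|/imsetS//]; apply/subsetP => x xA.
by rewrite -(mem_imset _ _ (@perm_inj _ s)) sAB ?imset_f.
Qed.

Lemma imset_tpermU1 (a b : T) B : a \notin B -> b \notin B ->
  tperm a b @: (a |: B) = b |: B.
Proof.
move=> aB bB; rewrite imsetU1 tpermL -[in RHS](imset_id B).
congr (_ |: _); apply: eq_in_imset => x xB /=.
by rewrite tpermD //; [apply: contraNneq aB | apply: contraNneq bB] => ->.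
Qed.

End PermSets.

Section SymmetricPolynomials.
Variables (N : nat) (R : comNzRingType).
Implicit Types (A B : {set 'I_N}) (s : 'S_N).

Lemma msymX s (i : 'I_N) : msym s ('X_i : {mpoly R[N]}) = 'X_(s i).
Proof. by rewrite /msym mmapX mmap1U. Qed.

Lemma sym_orbit_msym (g : {mpoly R[N]}) s :
  {homo msym s : q / q \in sym_orbit g}.
Proof.
move=> q /existsP[u /eqP ->]; apply/existsP; exists (u * s)%g.
by rewrite msymMm.
Qed.

Lemma xv_ord (i : 'I_N) : xv N R i = 'X_i.
Proof. by rewrite /xv valK. Qed.

Lemma msym_tperm_xv (a b : 'I_N) j :
  j != val a -> j != val b -> msym (tperm a b) (xv N R j) = xv N R j.
Proof.
rewrite /xv; case: insubP => [i _ <-|_] ia ib; last by rewrite raddf0.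
by rewrite msymX tpermD // -val_eqE eq_sym.
Qed.

Definition esym_set (j : nat) A : {mpoly R[N]} :=
  \sum_(h : {set 'I_N} | (h \subset A) && (#|h| == j)) \prod_(i in h) 'X_i.

Lemma esym_set0 A : esym_set 0 A = 1.
Proof.
rewrite /esym_set (bigD1 set0) ?sub0set ?cards0 //= big_set0 big1 ?addr0 //.
by move=> h /andP[/andP[_ /eqP/cards0_eq ->]]; rewrite eqxx.
Qed.

Lemma msym_esym_set s j A : msym s (esym_set j A) = esym_set j (s @: A).
Proof.
rewrite /esym_set raddf_sum [RHS](reindex (fun h : {set 'I_N} => s @: h)) /=.
  apply: eq_big => [h|h _].
    by rewrite imset_perm_subset card_imset //; apply: perm_inj.
  rewrite rmorph_prod big_imset /=; last by move=> x y _ _; apply: perm_inj.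
  by apply: eq_bigr => i _; rewrite msymX.
exists (fun h : {set 'I_N} => (s^-1)%g @: h) => h _;
by rewrite -imset_comp -[RHS]imset_id; apply: eq_imset => i /=; rewrite ?permK ?permKV.
Qed.

Lemma esym_setU1 j (a : 'I_N) B : a \notin B ->
  esym_set j.+1 (a |: B) = esym_set j.+1 B + 'X_a * esym_set j B.
Proof.
move=> aB; rewrite /esym_set (bigID (fun h : {set 'I_N} => a \in h)) /= addrC.
congr (_ + _); first by apply: eq_bigl => h; rewrite andbAC -subsetD1 setU1K.
rewrite (reindex_onto (fun h => a |: h) (fun h => h :\ a)) /=; last first.
  by move=> h /andP[_ ah]; rewrite setD1K.
rewrite mulr_sumr; apply: eq_big => [h|h /andP[_ /eqP ha]]; last first.
  by rewrite big_setU1 //= -ha !inE eqxx.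
have [ah|ah] := boolP (a \in h); last first.
  by rewrite setU1K // eqxx setU11 !andbT -subDset setU1K // cardsU1 ah add1n eqSS.
have -> : (h \subset B) = false by apply: contraNF aB => /subsetP; apply.
have -> : ((a |: h) :\ a == h) = false.
  by apply/negbTE; apply: contraTN ah => /eqP <-; rewrite !inE eqxx.
by rewrite !andbF.
Qed.

Lemma esym_setU1B j (a b : 'I_N) B : a \notin B -> b \notin B ->
  esym_set j.+1 (a |: B) - esym_set j.+1 (b |: B) = ('X_a - 'X_b) * esym_set j B.
Proof.
by move=> aB bB; rewrite !esym_setU1 // opprD addrACA subrr add0r -mulrBl.
Qed.

End SymmetricPolynomials.

Arguments esym_set {N R} j A.

Section DiagonalProduct.
Variables (R : comNzRingType) (n d N : nat).
Hypotheses (hdn : (d <= n)%N) (hnN : (n + d <= N)%N).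

Local Notation I := (in_ideal_gen (sym_orbit (esym_first N R n d))).
Local Notation P k := (\prod_(i < k) (xv N R i - xv N R (n + i))).
Local Notation A k := [set i : 'I_N | (k <= i < n)%N].

Lemma in_ideal_diag_step k : (k < d)%N ->
  I (P k * esym_set (d - k)%N (A k)) -> I (P k.+1 * esym_set (d - k.+1)%N (A k.+1)).
Proof.
move=> kd IHk.
have kN : (k < N)%N by lia.
have nkN : (n + k < N)%N by lia.
pose a := Ordinal kN; pose b := Ordinal nkN.
have aA : a \notin A k.+1 by rewrite inE /=; lia.
have bA : b \notin A k.+1 by rewrite inE /=; lia.
have A_split : A k = a |: A k.+1.
  apply/setP => i; rewrite !inE -val_eqE /=.
  by case: (ltngtP k i) => [ki|ik|<-] /=; rewrite ?ki ?andbF //; lia.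
have P_fixed : msym (tperm a b) (P k) = P k.
  rewrite rmorph_prod; apply: eq_bigr => i _; rewrite rmorphB /=.
  have ik := ltn_ord i; by rewrite !msym_tperm_xv //; apply/eqP => /=; lia.
have dk : (d - k = (d - k.+1).+1)%N by lia.
have := in_ideal_genB IHk (in_ideal_gen_rmorph (sym_orbit_msym (tperm a b)) IHk).
rewrite rmorphM /= P_fixed msym_esym_set A_split imset_tpermU1 // -mulrBr dk.
by rewrite esym_setU1B // big_ord_recr /= -mulrA -(xv_ord R a) -(xv_ord R b).
Qed.

Lemma in_ideal_diag k : (k <= d)%N -> I (P k * esym_set (d - k)%N (A k)).
Proof.
elim: k => [_|k IHk kd]; last exact: in_ideal_diag_step (IHk (ltnW kd)).
(* [A 0] is the index set of [esym_first] since [0 <= i] computes to [true]. *)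
rewrite big_ord0 mul1r subn0; apply: in_ideal_gen_mem; apply/existsP.
by exists 1%g; rewrite msym1m.
Qed.

End DiagonalProduct.

Theorem mainTheorem11 (K : fieldType) (n d N : nat)
  (hd1 : (1 <= d)%N) (hdn : (d <= n)%N) (hN : (n + d <= N)%N) :
  in_ideal_gen (@sym_orbit N K (@esym_first N K n d))
    (\prod_(i < d) (@xv N K i - @xv N K (n + i))).
Proof. by have := in_ideal_diag K hdn hN (leqnn d); rewrite subnn esym_set0 mulr1. Qed.
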